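(* For every $r\ge0$, $\lim_{\Lambda\to\infty}U_\Lambda(r)=U(r)$. Moreover, with $\kappa_0=15\pi/2$, for every $\Lambda\ge1$ and every integer $m\ge0$, $$\Big\|\frac{U_\Lambda-U}{(1+U)^{m+1}}\Big\|_{L^\infty(\mathbb{R}_+)}\le\kappa_0^{m+3}\max\Big\{\frac1{(1+B_\Lambda)^m},\frac1{E(2\Lambda)}\Big\}.$$ Finally, with $\kappa_1=258/\pi$, for every $\Lambda\ge1$ and all $0\le r\le2\Lambda$, $0\le U_\Lambda(r)\le\kappa_1(1+U(r))$.
   Context: $E(r)=(1+r^2)^{1/2}$. $B_\Lambda=\frac1\pi\int_0^{\Lambda/E(\Lambda)}\frac{z^2-z^4/3}{1-z^2}dz$. For $0\le r\le2\Lambda$, with $Z_\Lambda(r)=(E(\Lambda)-E(\Lambda-r))/r$ (and $Z_\Lambda(0)=\Lambda/E(\Lambda)$), $B_\Lambda(r)=\frac1\pi\int_0^{Z_\Lambda(r)}\frac{z^2-z^4/3}{(1-z^2)(1+r^2(1-z^2)/4)}dz+\frac{r}{2\pi}\int_0^{Z_\Lambda(r)}\frac{z-z^3/3}{E(\Lambda)-rz/2}dz$. $U_\Lambda(r)=B_\Lambda-B_\Lambda(r)$ for $0\le r\le2\Lambda$ and $U_\Lambda(r)=0$ for $r>2\Lambda$. $U(r)=\frac{r^2}{4\pi}\int_0^1\frac{z^2-z^4/3}{1+r^2(1-z^2)/4}dz$. *)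

From Stdlib Require Import Reals Lra ClassicalEpsilon.
Open Scope R_scope.

(* When f is
   Riemann integrable on [a,b] this is exactly the Riemann integral. *)
Definition Rint (f : R -> R) (a b : R) : R :=
  epsilon (inhabits 0)
    (fun v => exists pr : Riemann_integrable f a b, RiemannInt pr = v).

Definition E (r : R) : R := sqrt (1 + r ^ 2).

Definition BL (L : R) : R :=
  / PI * Rint (fun z => (z ^ 2 - z ^ 4 / 3) / (1 - z ^ 2)) 0 (L / E L).

Definition ZL (L r : R) : R :=
  if Req_EM_T r 0 then L / E L else (E L - E (L - r)) / r.

Definition BLr (L r : R) : R :=
  / PI * Rint (fun z => (z ^ 2 - z ^ 4 / 3)
                         / ((1 - z ^ 2) * (1 + r ^ 2 * (1 - z ^ 2) / 4)))
               0 (ZL L r)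
  + r / (2 * PI) * Rint (fun z => (z - z ^ 3 / 3) / (E L - r * z / 2))
               0 (ZL L r).

Definition UL (L r : R) : R :=
  if Rle_dec r (2 * L) then BL L - BLr L r else 0.

Definition U (r : R) : R :=
  r ^ 2 / (4 * PI) * Rint (fun z => (z ^ 2 - z ^ 4 / 3) / (1 + r ^ 2 * (1 - z ^ 2) / 4)) 0 1.

Definition kappa0 : R := 15 * PI / 2.
Definition kappa1 : R := 258 / PI.

(* Write [a = L / E L] and [Z = ZL L r]. Splitting the integrals at [Z] and using the
   partial fraction [fBr r = fB - (r ^ 2 / 4) fU r] gives
     [PI * UL L r = Int_Z^a fB + (r^2/4) Int_0^Z fU - (r/2) Int_0^Z gBr],
     [PI * U r = (r^2/4) (Int_0^Z fU + Int_Z^1 fU)].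
   With [p = E L + L] and [q = E (L - r) + (L - r)], the numbers [a], [Z], [r] and
   [E L + E (L - r)] are rational functions of [p] and [q].
   Lower bound: [fB] is increasing, and [gBr] and [fU] are compared pointwise with
   polynomials; what remains is a polynomial inequality in [Z] and [a - Z] on a
   simplex, proved by a Pólya certificate.
   Upper bounds: when [8 r ^ 2 < E L ^ 2] every piece of [PI * (UL L r - U r)] is
   [O (r / E L)], which also gives the limit; otherwise [Int_Z^a fB] is at most
   [33 (r^2/4) Int_Z^1 fU], so [|UL - U| <= 34 (1 + U)]. The weighted bound
   interpolates between this and [|UL - U| <= 400 r (1 + U) / E (2 L)], using
   [PI * U r >= ln (1 + r^2/4) / 12] and [PI * BL L <= (2/3) ln (2 (1 + L^2))]. *)

From Stdlib Require Import Reals Lra Psatz ClassicalEpsilon FunctionalExtensionality.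
Open Scope R_scope.

Definition continuous_on (f : R -> R) (a b : R) : Prop :=
  forall x, a <= x <= b -> continuity_pt f x.

Lemma continuous_on_subinterval f a b c d :
  a <= c -> d <= b -> continuous_on f a b -> continuous_on f c d.
Proof. intros hac hdb hf x hx; apply hf; lra. Qed.

Lemma continuous_on_plus_scal f g a b l :
  continuous_on f a b -> continuous_on g a b -> continuous_on (fun x => f x + l * g x) a b.
Proof.
  intros hf hg x hx; apply continuity_pt_plus; [now apply hf |].
  apply continuity_pt_mult; [apply continuity_pt_const; now intros ? ? | now apply hg].
Qed.

Lemma Rint_RiemannInt f a b (pr : Riemann_integrable f a b) : Rint f a b = RiemannInt pr.
Proof.
  unfold Rint.
  destruct (epsilon_spec (inhabits 0)
             (fun v => exists pr : Riemann_integrable f a b, RiemannInt pr = v))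
    as [pr' <-].
  { exists (RiemannInt pr), pr; reflexivity. }
  apply RiemannInt_P5.
Qed.

Lemma continuous_on_Riemann_integrable f a b :
  a <= b -> continuous_on f a b -> Riemann_integrable f a b.
Proof. intros; apply continuity_implies_RiemannInt; auto. Qed.

Lemma Rint_le_compat f g a b : a <= b -> continuous_on f a b -> continuous_on g a b ->
  (forall x, a <= x <= b -> f x <= g x) -> Rint f a b <= Rint g a b.
Proof.
  intros hab hf hg hle.
  rewrite (Rint_RiemannInt _ _ _ (continuous_on_Riemann_integrable f a b hab hf)),
    (Rint_RiemannInt _ _ _ (continuous_on_Riemann_integrable g a b hab hg)).
  apply RiemannInt_P19; auto; intros x hx; apply hle; lra.
Qed.

Lemma Rint_le_const f a b M : a <= b -> continuous_on f a b ->
  (forall x, a <= x <= b -> f x <= M) -> Rint f a b <= M * (b - a).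
Proof.
  intros hab hf hle.
  rewrite (Rint_RiemannInt _ _ _ (continuous_on_Riemann_integrable f a b hab hf)),
    <- (RiemannInt_P15 (RiemannInt_P14 a b M)).
  apply RiemannInt_P19; auto; intros x hx; apply hle; lra.
Qed.

Lemma Rint_ge_const f a b M : a <= b -> continuous_on f a b ->
  (forall x, a <= x <= b -> M <= f x) -> M * (b - a) <= Rint f a b.
Proof.
  intros hab hf hle.
  rewrite (Rint_RiemannInt _ _ _ (continuous_on_Riemann_integrable f a b hab hf)),
    <- (RiemannInt_P15 (RiemannInt_P14 a b M)).
  apply RiemannInt_P19; auto; intros x hx; apply hle; lra.
Qed.

Lemma Rint_ge0 f a b : a <= b -> continuous_on f a b ->
  (forall x, a <= x <= b -> 0 <= f x) -> 0 <= Rint f a b.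
Proof. intros hab hf hf0; generalize (Rint_ge_const f a b 0 hab hf hf0); lra. Qed.

Lemma Rint_ext f g a b : a <= b -> continuous_on f a b -> continuous_on g a b ->
  (forall x, a <= x <= b -> f x = g x) -> Rint f a b = Rint g a b.
Proof.
  intros hab hf hg hfg.
  apply Rle_antisym; apply Rint_le_compat; auto; intros x hx; rewrite hfg; auto; lra.
Qed.

Lemma Rint_Chasles f a b c : a <= b -> b <= c -> continuous_on f a c ->
  Rint f a b + Rint f b c = Rint f a c.
Proof.
  intros hab hbc hf.
  rewrite (Rint_RiemannInt _ _ _ (continuous_on_Riemann_integrable f a b hab
             (continuous_on_subinterval f a c a b (Rle_refl _) hbc hf))),
    (Rint_RiemannInt _ _ _ (continuous_on_Riemann_integrable f b c hbc
             (continuous_on_subinterval f a c b c hab (Rle_refl _) hf))),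
    (Rint_RiemannInt _ _ _ (continuous_on_Riemann_integrable f a c (Rle_trans _ _ _ hab hbc) hf)).
  apply RiemannInt_P26.
Qed.

Lemma Rint_plus_scal f g a b l : a <= b -> continuous_on f a b -> continuous_on g a b ->
  Rint (fun x => f x + l * g x) a b = Rint f a b + l * Rint g a b.
Proof.
  intros hab hf hg.
  assert (prf := continuous_on_Riemann_integrable f a b hab hf).
  assert (prg := continuous_on_Riemann_integrable g a b hab hg).
  rewrite (Rint_RiemannInt _ _ _ prf), (Rint_RiemannInt _ _ _ prg),
    (Rint_RiemannInt _ _ _ (RiemannInt_P10 l prf prg)).
  apply RiemannInt_P13.
Qed.

Lemma Rint_scal f a b l : a <= b -> continuous_on f a b ->
  Rint (fun x => l * f x) a b = l * Rint f a b.
Proof.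
  intros hab hf.
  assert (h0 : continuous_on (fun _ => 0) a b) by (intros x _; apply continuity_pt_const; now intros ? ?).
  assert (hint0 : Rint (fun _ => 0) a b = 0).
  { generalize (Rint_le_const _ a b 0 hab h0 (fun x _ => Rle_refl 0)),
      (Rint_ge_const _ a b 0 hab h0 (fun x _ => Rle_refl 0)); lra. }
  replace (fun x => l * f x) with (fun x => (fun _ => 0) x + l * f x)
    by (extensionality x; ring).
  rewrite Rint_plus_scal, hint0 by auto; ring.
Qed.

Lemma Rint_minus f g a b : a <= b -> continuous_on f a b -> continuous_on g a b ->
  Rint (fun x => f x - g x) a b = Rint f a b - Rint g a b.
Proof.
  intros hab hf hg.
  replace (fun x => f x - g x) with (fun x => f x + (-1) * g x) by (extensionality x; ring).
  rewrite Rint_plus_scal by auto; ring.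
Qed.

Lemma Rint_antiderivative f F a b : a <= b -> continuous_on f a b ->
  (forall x, a <= x <= b -> derivable_pt_lim F x (f x)) -> Rint f a b = F b - F a.
Proof.
  intros hab hf hF.
  rewrite (Rint_RiemannInt _ _ _ (continuous_on_Riemann_integrable f a b hab hf)),
    (RiemannInt_P20 hab (FTC_P1 hab hf)).
  assert (hF' : antiderivative f F a b).
  { split; auto. intros x hx. exists (exist _ (f x) (hF x hx)).
    symmetry; apply derive_pt_eq_0, hF; auto. }
  destruct (antiderivative_Ucte _ _ _ _ _ (RiemannInt_P29 hab hf) hF') as [c hc].
  rewrite (hc b), (hc a) by lra; ring.
Qed.

Lemma Rdiv_le_cross A B C D : 0 < B -> 0 < D -> A * D <= C * B -> A / B <= C / D.
Proof.
  intros hB hD h.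
  assert (e : C / D - A / B = (C * B - A * D) * / (B * D)) by (field; lra).
  assert (0 < / (B * D)) by (apply Rinv_0_lt_compat; nra).
  nra.
Qed.

Lemma Rdiv_le_0_compat x y : 0 <= x -> 0 < y -> 0 <= x / y.
Proof. intros hx hy; apply Rmult_le_pos; [lra | left; apply Rinv_0_lt_compat; lra]. Qed.

Lemma Rdiv_lt_1 x y : 0 < y -> x < y -> x / y < 1.
Proof. intros hy hxy; apply (Rmult_lt_reg_r y); [lra|]; field_simplify; lra. Qed.

Lemma ln_le x y : 0 < x -> x <= y -> ln x <= ln y.
Proof.
  intros hx [hxy | <-]; [left; apply ln_increasing | right]; auto.
Qed.

Lemma ln_le_inv x y : 0 < x -> 0 < y -> ln x <= ln y -> x <= y.
Proof.
  intros hx hy h; destruct (Rle_or_lt x y) as [|hyx]; auto.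
  generalize (ln_increasing y x hy hyx); lra.
Qed.

Lemma ln_le_sub1 x : 0 < x -> ln x <= x - 1.
Proof. intros hx; generalize (exp_ineq1_le (ln x)); rewrite exp_ln; lra. Qed.

Lemma ln_div x y : 0 < x -> 0 < y -> ln (x / y) = ln x - ln y.
Proof.
  intros hx hy; unfold Rdiv.
  rewrite ln_mult, ln_Rinv by (try apply Rinv_0_lt_compat; auto); ring.
Qed.

Lemma ln_sub_le a b : 0 < a -> 0 < b -> ln b - ln a <= (b - a) / a.
Proof.
  intros ha hb; rewrite <- ln_div by lra.
  generalize (ln_le_sub1 (b / a) ltac:(apply Rdiv_lt_0_compat; lra)).
  replace (b / a - 1) with ((b - a) / a) by (field; lra); lra.
Qed.

Lemma ln2_le_1 : ln 2 <= 1.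
Proof. generalize (ln_le_sub1 2 ltac:(lra)); lra. Qed.

Lemma PI_gt_3 : 3 < PI.
Proof. generalize PI2_3_2; lra. Qed.

Lemma E_sqr x : E x ^ 2 = 1 + x ^ 2.
Proof. unfold E; rewrite pow2_sqrt; nra. Qed.

Lemma E_pos x : 0 < E x.
Proof. unfold E; apply sqrt_lt_R0; nra. Qed.

Lemma E_gt_abs x : x < E x /\ - x < E x.
Proof. generalize (E_sqr x) (E_pos x); intros; split; nra. Qed.

Lemma E_ge_1 x : 1 <= E x.
Proof. generalize (E_sqr x) (E_pos x); intros; nra. Qed.

Lemma E_lt_add_1 x : 0 < x -> E x < x + 1.
Proof.
  intros hx; generalize (E_sqr x) (E_pos x); intros hE hE0.
  destruct (Rlt_or_le (E x) (x + 1)) as [| h]; auto.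
  assert ((x + 1) * (x + 1) <= E x * E x) by (apply Rmult_le_compat; lra).
  nra.
Qed.

(* With [p = E x + x = exp (arsinh x)], [E x] and [x] are [cosh] and [sinh] of [ln p]. *)
Lemma E_param x :
  let p := E x + x in 0 < p /\ E x = (p ^ 2 + 1) / (2 * p) /\ x = (p ^ 2 - 1) / (2 * p).
Proof.
  intros p; generalize (E_sqr x) (E_gt_abs x); intros hE hgt.
  assert (hp : 0 < p) by (unfold p; lra).
  repeat split; auto; apply (Rmult_eq_reg_r (2 * p)); try lra;
    field_simplify; try lra; unfold p; nra.
Qed.

Lemma E_double_le x : E (2 * x) <= 2 * E x.
Proof. generalize (E_sqr (2 * x)) (E_sqr x) (E_pos (2 * x)) (E_pos x); intros; nra. Qed.

Lemma ZL_0 L : ZL L 0 = L / E L.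
Proof. unfold ZL; destruct (Req_EM_T 0 0); [reflexivity | lra]. Qed.

Lemma ZL_pos L r : r <> 0 -> ZL L r = (E L - E (L - r)) / r.
Proof. intros hr; unfold ZL; destruct (Req_EM_T r 0); [lra | reflexivity]. Qed.

Lemma div_E_bounds L : 0 <= L -> 0 <= L / E L < 1.
Proof.
  intros hL; generalize (E_pos L) (E_gt_abs L); intros hE hgt.
  split; [apply Rdiv_le_0_compat | apply Rdiv_lt_1]; lra.
Qed.

Lemma one_sub_div_E_sqr L : 1 - (L / E L) ^ 2 = / E L ^ 2.
Proof.
  generalize (E_sqr L) (E_pos L); intros hE hE0.
  replace (1 - (L / E L) ^ 2) with ((E L ^ 2 - L ^ 2) / E L ^ 2) by (field; lra).
  rewrite hE; field; nra.
Qed.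

Section Parametrization.

Variables L r : R.
Hypotheses (hL : 1 <= L) (hr : 0 < r) (hr2 : r <= 2 * L).

Let p := E L + L.
Let q := E (L - r) + (L - r).

Let hp : 0 < p /\ E L = (p ^ 2 + 1) / (2 * p) /\ L = (p ^ 2 - 1) / (2 * p).
Proof. exact (E_param L). Qed.

Let hq : 0 < q /\ E (L - r) = (q ^ 2 + 1) / (2 * q) /\ L - r = (q ^ 2 - 1) / (2 * q).
Proof. exact (E_param (L - r)). Qed.

Lemma param_p_ge_2 : 2 <= p.
Proof. generalize (E_ge_1 L); unfold p; lra. Qed.

Lemma param_q_pos : 0 < q.
Proof. apply hq. Qed.

Lemma param_q_lt_p : q < p.
Proof.
  destruct hp as (hp0 & _ & hLp), hq as (hq0 & _ & hLq).
  destruct (Rlt_or_le q p) as [|hpq]; auto; exfalso.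
  assert (e : (q ^ 2 - 1) / (2 * q) - (p ^ 2 - 1) / (2 * p)
              = (q - p) * (p * q + 1) / (2 * p * q)) by (field; lra).
  assert (0 <= (q - p) * (p * q + 1) / (2 * p * q)) by (apply Rdiv_le_0_compat; [apply Rmult_le_pos | ]; nra).
  lra.
Qed.

Lemma param_pq_ge_1 : 1 <= p * q.
Proof.
  destruct hp as (hp0 & _ & hLp), hq as (hq0 & _ & hLq).
  destruct (Rlt_or_le (p * q) 1) as [hpq|]; auto; exfalso.
  assert (e : - ((p ^ 2 - 1) / (2 * p)) - (q ^ 2 - 1) / (2 * q)
              = (1 - p * q) * (p + q) / (2 * p * q)) by (field; lra).
  assert (0 < (1 - p * q) * (p + q) / (2 * p * q)) by (apply Rdiv_lt_0_compat; nra).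
  lra.
Qed.

Lemma param_r : r = (p - q) * (p * q + 1) / (2 * p * q).
Proof.
  destruct hp as (hp0 & _ & hLp), hq as (hq0 & _ & hLq).
  replace r with (L - (L - r)) by ring; rewrite hLq, hLp at 1; field; lra.
Qed.

Lemma param_a : L / E L = (p ^ 2 - 1) / (p ^ 2 + 1).
Proof.
  destruct hp as (hp0 & hEp & hLp).
  rewrite hEp, hLp at 1; field; nra.
Qed.

Lemma param_a_sub_ZL :
  L / E L - ZL L r = 2 * p * (p - q) / ((p ^ 2 + 1) * (p * q + 1)).
Proof.
  generalize param_q_lt_p param_pq_ge_1; intros hqp hpq.
  destruct hp as (hp0 & hEp & hLp), hq as (hq0 & hEq & _).
  rewrite ZL_pos, hEq, hEp, param_r by lra; rewrite hLp at 1; field; repeat split; nra.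
Qed.

Lemma param_ZL : ZL L r = (p * q - 1) / (p * q + 1).
Proof.
  generalize param_q_lt_p param_pq_ge_1 param_r; intros hqp hpq hrpq.
  destruct hp as (hp0 & hEp & _), hq as (hq0 & hEq & _).
  rewrite ZL_pos, hEq, hEp, hrpq by lra; field; repeat split; nra.
Qed.

Lemma param_E_sum : E L + E (L - r) = (p + q) * (p * q + 1) / (2 * p * q).
Proof.
  destruct hp as (hp0 & hEp & _), hq as (hq0 & hEq & _).
  rewrite hEp, hEq; field; lra.
Qed.

Lemma r_mul_ZL : r * ZL L r = E L - E (L - r).
Proof. rewrite ZL_pos by lra; field; lra. Qed.

Lemma r_div_E_sum :
  r / (E L + E (L - r)) = (L / E L - ZL L r) / (1 - L / E L * ZL L r).
Proof.
  generalize param_p_ge_2 param_q_pos param_q_lt_p param_pq_ge_1; intros.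
  rewrite param_E_sum, param_a, param_ZL, param_r; field; repeat split; nra.
Qed.

Lemma r_sqr_ratio :
  r ^ 2 / 4 / (1 + r ^ 2 / 4)
  = (L / E L - ZL L r) ^ 2
    / ((1 - (L / E L) ^ 2) * (1 - ZL L r ^ 2) ^ 2 + (L / E L - ZL L r) ^ 2).
Proof.
  generalize param_p_ge_2 param_q_pos param_q_lt_p param_pq_ge_1; intros.
  rewrite param_a, param_ZL, param_r.
  field; repeat split; try nra; apply Rgt_not_eq, Rplus_lt_le_0_compat; try apply pow2_ge_0.
  - replace ((p ^ 2 + 1) ^ 2 - (p ^ 2 - 1) ^ 2) with (4 * p ^ 2) by ring.
    replace ((p * q + 1) ^ 2 - (p * q - 1) ^ 2) with (4 * (p * q)) by ring.
    apply Rmult_lt_0_compat; [| apply pow_lt]; nra.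
  - nra.
Qed.

Lemma ZL_bounds : 0 <= ZL L r <= L / E L.
Proof.
  generalize param_p_ge_2 param_q_pos param_q_lt_p param_pq_ge_1; intros.
  rewrite param_ZL, param_a; split;
    [apply Rdiv_le_0_compat | apply Rdiv_le_cross]; nra.
Qed.

Lemma ZL_denominator_pos z : 0 <= z <= ZL L r -> 0 < E L - r * z / 2.
Proof.
  intros hz; generalize r_mul_ZL (E_pos L) (E_pos (L - r)); intros hrZ hE hE'.
  assert (r * z <= r * ZL L r) by (apply Rmult_le_compat_l; lra).
  lra.
Qed.

End Parametrization.

Definition fB (z : R) : R := (z ^ 2 - z ^ 4 / 3) / (1 - z ^ 2).
Definition fBr (r z : R) : R :=
  (z ^ 2 - z ^ 4 / 3) / ((1 - z ^ 2) * (1 + r ^ 2 * (1 - z ^ 2) / 4)).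
Definition gBr (L r z : R) : R := (z - z ^ 3 / 3) / (E L - r * z / 2).
Definition fU (r z : R) : R := (z ^ 2 - z ^ 4 / 3) / (1 + r ^ 2 * (1 - z ^ 2) / 4).

Lemma BL_fB L : BL L = / PI * Rint fB 0 (L / E L).
Proof. reflexivity. Qed.

Lemma BLr_fBr L r :
  BLr L r = / PI * Rint (fBr r) 0 (ZL L r) + r / (2 * PI) * Rint (gBr L r) 0 (ZL L r).
Proof. reflexivity. Qed.

Lemma U_fU r : U r = r ^ 2 / (4 * PI) * Rint (fU r) 0 1.
Proof. reflexivity. Qed.

Lemma fU_denom_ge_1 r z : 0 <= z <= 1 -> 1 <= 1 + r ^ 2 * (1 - z ^ 2) / 4.
Proof. intros hz; assert (0 <= r ^ 2 * (1 - z ^ 2)) by (apply Rmult_le_pos; nra); lra. Qed.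

Lemma fB_continuous_on a b : 0 <= a -> b < 1 -> continuous_on fB a b.
Proof. intros ha hb z hz; unfold fB; reg; apply Rgt_not_eq; nra. Qed.

Lemma fBr_continuous_on r a b : 0 <= a -> b < 1 -> continuous_on (fBr r) a b.
Proof.
  intros ha hb z hz; unfold fBr; reg.
  assert (0 < 1 - z ^ 2) by nra.
  generalize (fU_denom_ge_1 r z ltac:(lra)); intros; apply Rgt_not_eq; nra.
Qed.

Lemma gBr_continuous_on L r a b :
  (forall z, a <= z <= b -> 0 < E L - r * z / 2) -> continuous_on (gBr L r) a b.
Proof. intros h z hz; unfold gBr; reg; generalize (h z hz); lra. Qed.

Lemma fU_continuous_on r a b : 0 <= a -> b <= 1 -> continuous_on (fU r) a b.
Proof. intros ha hb z hz; unfold fU; reg; generalize (fU_denom_ge_1 r z ltac:(lra)); lra. Qed.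

Lemma cubic_bounds z : 0 <= z <= 1 -> 0 <= z - z ^ 3 / 3 <= 2 / 3.
Proof.
  intros hz.
  assert (e : 2 / 3 - (z - z ^ 3 / 3) = (1 - z) ^ 2 * (2 + z) / 3) by field.
  assert (0 <= (1 - z) ^ 2 * (2 + z)) by (apply Rmult_le_pos; nra).
  split; nra.
Qed.

Lemma quartic_bounds z : 0 <= z <= 1 -> 0 <= z ^ 2 - z ^ 4 / 3 <= 2 / 3.
Proof. intros hz; generalize (cubic_bounds z hz); intros; split; nra. Qed.

Lemma fU_bounds r z : 0 <= z <= 1 -> 0 <= fU r z <= 2 / 3.
Proof.
  intros hz; unfold fU; generalize (quartic_bounds z hz) (fU_denom_ge_1 r z hz); intros.
  split; [apply Rdiv_le_0_compat | apply Rdiv_le_cross]; lra.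
Qed.

Lemma Rint_fU_ge0 r b b' : 0 <= b <= b' -> b' <= 1 -> 0 <= Rint (fU r) b b'.
Proof.
  intros hb hb'; apply Rint_ge0; try lra; [apply fU_continuous_on; lra |].
  intros x hx; apply fU_bounds; lra.
Qed.

Lemma fB_ge0 z : 0 <= z < 1 -> 0 <= fB z.
Proof. intros hz; unfold fB; generalize (quartic_bounds z ltac:(lra)); intros; apply Rdiv_le_0_compat; nra. Qed.

Lemma fB_le_increasing z w : 0 <= z -> z <= w -> w < 1 -> fB z <= fB w.
Proof.
  intros hz hzw hw; unfold fB.
  assert (0 < 1 - z ^ 2) by nra; assert (0 < 1 - w ^ 2) by nra.
  apply Rdiv_le_cross; auto.
  assert (z ^ 2 <= w ^ 2) by nra.
  assert (0 <= 1 - (z ^ 2 + w ^ 2) / 3 + z ^ 2 * w ^ 2 / 3) by nra.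
  nra.
Qed.

Lemma fB_le_inv z : 0 <= z < 1 -> fB z <= 2 / 3 / (1 - z ^ 2).
Proof.
  intros hz; unfold fB; generalize (quartic_bounds z ltac:(lra)); intros.
  assert (0 < 1 - z ^ 2) by nra.
  apply Rdiv_le_cross; nra.
Qed.

Lemma U_ge0 r : 0 <= U r.
Proof.
  rewrite U_fU; apply Rmult_le_pos.
  - apply Rdiv_le_0_compat; [apply pow2_ge_0 | generalize PI_RGT_0; lra].
  - apply Rint_ge0; [lra | apply fU_continuous_on; lra |]; intros x hx; apply fU_bounds; lra.
Qed.

Lemma BL_ge0 L : 0 <= L -> 0 <= BL L.
Proof.
  intros hL; generalize (div_E_bounds L hL) PI_RGT_0; intros ha hpi.
  rewrite BL_fB; apply Rmult_le_pos; [left; apply Rinv_0_lt_compat; lra |].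
  apply Rint_ge0; [lra | apply fB_continuous_on; lra |].
  intros x hx; apply fB_ge0; lra.
Qed.

Lemma UL_out_of_range L r : 2 * L < r -> UL L r = 0.
Proof. intros h; unfold UL; destruct (Rle_dec r (2 * L)); [lra | reflexivity]. Qed.

Lemma UL_at_0 L : 0 <= L -> UL L 0 = 0.
Proof.
  intros hL; unfold UL; destruct (Rle_dec 0 (2 * L)); [| lra].
  rewrite BLr_fBr, ZL_0, BL_fB.
  replace (fBr 0) with fB by (extensionality z; unfold fB, fBr;
    now replace (1 + 0 ^ 2 * (1 - z ^ 2) / 4) with 1 by field; rewrite Rmult_1_r).
  unfold Rdiv; ring.
Qed.

Lemma U_at_0 : U 0 = 0.
Proof. rewrite U_fU; unfold Rdiv; ring. Qed.

Lemma UL_U_decomposition L r : 0 <= r <= 2 * L ->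
  let a := L / E L in let Z := ZL L r in
  0 <= Z <= a -> a < 1 -> (forall z, 0 <= z <= Z -> 0 < E L - r * z / 2) ->
  PI * UL L r = Rint fB Z a + r ^ 2 / 4 * Rint (fU r) 0 Z - r / 2 * Rint (gBr L r) 0 Z
  /\ PI * U r = r ^ 2 / 4 * (Rint (fU r) 0 Z + Rint (fU r) Z 1).
Proof.
  intros hr a Z hZ ha hden.
  assert (hB : Rint fB 0 a = Rint fB 0 Z + Rint fB Z a).
  { symmetry; apply Rint_Chasles; try lra; apply fB_continuous_on; lra. }
  assert (hBr : Rint (fBr r) 0 Z = Rint fB 0 Z + (- (r ^ 2 / 4)) * Rint (fU r) 0 Z).
  { rewrite <- Rint_plus_scal; try lra;
      try apply fB_continuous_on; try apply fU_continuous_on; try lra.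
    apply Rint_ext; try lra.
    - apply fBr_continuous_on; lra.
    - apply continuous_on_plus_scal; [apply fB_continuous_on | apply fU_continuous_on]; lra.
    - intros z hz; unfold fB, fBr, fU.
      generalize (fU_denom_ge_1 r z ltac:(lra)); intros; field; split; nra. }
  assert (hU : Rint (fU r) 0 1 = Rint (fU r) 0 Z + Rint (fU r) Z 1).
  { symmetry; apply Rint_Chasles; try lra; apply fU_continuous_on; lra. }
  generalize PI_RGT_0; intros hpi; split.
  - unfold UL; destruct (Rle_dec r (2 * L)); [| lra].
    rewrite BL_fB, BLr_fBr; fold a Z; rewrite hB, hBr; field; lra.
  - rewrite U_fU, hU; field; lra.
Qed.

Lemma derivable_pt_lim_quintic A B C D x :
  derivable_pt_lim (fun z => A * z ^ 2 + B * z ^ 3 + C * z ^ 4 + D * z ^ 5) x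
    (2 * A * x + 3 * B * x ^ 2 + 4 * C * x ^ 3 + 5 * D * x ^ 4).
Proof.
  pose proof (derivable_pt_lim_plus _ _ _ _ _
     (derivable_pt_lim_plus _ _ _ _ _
        (derivable_pt_lim_plus _ _ _ _ _
           (derivable_pt_lim_scal _ A x _ (derivable_pt_lim_pow x 2))
           (derivable_pt_lim_scal _ B x _ (derivable_pt_lim_pow x 3)))
        (derivable_pt_lim_scal _ C x _ (derivable_pt_lim_pow x 4)))
     (derivable_pt_lim_scal _ D x _ (derivable_pt_lim_pow x 5))) as H.
  unfold plus_fct, mult_real_fct in H; simpl pred in H; simpl INR in H.
  replace (2 * A * x + 3 * B * x ^ 2 + 4 * C * x ^ 3 + 5 * D * x ^ 4) with
    (A * (2 * x ^ 1) + B * ((2 + 1) * x ^ 2) + C * ((2 + 1 + 1) * x ^ 3)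
     + D * ((2 + 1 + 1 + 1) * x ^ 4)) by ring.
  exact H.
Qed.

Lemma derivable_pt_lim_ln_affine u v x : 0 < u + v * x ->
  derivable_pt_lim (fun z => ln (u + v * z)) x (v / (u + v * x)).
Proof.
  intros h.
  assert (h1 : derivable_pt_lim (fun z => u + v * z) x v).
  { pose proof (derivable_pt_lim_plus _ _ _ _ _ (derivable_pt_lim_const u x)
         (derivable_pt_lim_scal _ v x _ (derivable_pt_lim_id x))) as H.
    unfold plus_fct, mult_real_fct, fct_cte, id in H.
    now replace (0 + v * 1) with v in H by ring. }
  pose proof (derivable_pt_lim_comp _ _ _ _ _ h1 (derivable_pt_lim_ln _ h)) as H.
  unfold comp in H; replace (v / (u + v * x)) with (/ (u + v * x) * v) by (field; lra).
  exact H.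
Qed.

Lemma Rint_cubic_mult_affine k g Z : 0 <= Z ->
  Rint (fun z => (z - z ^ 3 / 3) * (k - g * z)) 0 Z
  = k * (Z ^ 2 / 2 - Z ^ 4 / 12) - g * (Z ^ 3 / 3 - Z ^ 5 / 15).
Proof.
  intros hZ.
  rewrite (Rint_antiderivative _
             (fun z => k / 2 * z ^ 2 + - g / 3 * z ^ 3 + - k / 12 * z ^ 4 + g / 15 * z ^ 5) 0 Z hZ).
  - field.
  - intros x hx; reg.
  - intros x hx.
    replace ((x - x ^ 3 / 3) * (k - g * x)) with
      (2 * (k / 2) * x + 3 * (- g / 3) * x ^ 2 + 4 * (- k / 12) * x ^ 3 + 5 * (g / 15) * x ^ 4)
      by field.
    apply derivable_pt_lim_quintic.
Qed.

Lemma Rint_inv_1_minus c a : 0 <= a < 1 -> Rint (fun z => c / (1 - z)) 0 a = - c * ln (1 - a).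
Proof.
  intros ha.
  rewrite (Rint_antiderivative _ (fun z => - c * ln (1 + -1 * z)) 0 a); try lra.
  - replace (1 + -1 * 0) with 1 by ring; replace (1 + -1 * a) with (1 - a) by ring.
    rewrite ln_1; ring.
  - intros x hx; reg; lra.
  - intros x hx.
    replace (c / (1 - x)) with (- c * (-1 / (1 + -1 * x))) by (field; lra).
    apply derivable_pt_lim_scal, derivable_pt_lim_ln_affine; lra.
Qed.

Lemma Rint_inv_affine_tail c : 0 <= c ->
  Rint (fun z => c / 6 / (1 + 2 * c * (1 - z))) (1 / 2) 1 = ln (1 + c) / 12.
Proof.
  intros hc.
  rewrite (Rint_antiderivative _ (fun z => - (1 / 12) * ln (1 + 2 * c + - 2 * c * z)) (1 / 2) 1);
    try lra.
  - replace (1 + 2 * c + -2 * c * 1) with 1 by ring.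
    replace (1 + 2 * c + -2 * c * (1 / 2)) with (1 + c) by field.
    rewrite ln_1; field.
  - intros x hx; reg; nra.
  - intros x hx.
    replace (c / 6 / (1 + 2 * c * (1 - x)))
      with (- (1 / 12) * (- 2 * c / (1 + 2 * c + - 2 * c * x))) by (field; nra).
    apply derivable_pt_lim_scal, derivable_pt_lim_ln_affine; nra.
Qed.

(* Pólya certificate: in the barycentric coordinates [Z], [d], [y = 1 - Z - d] of the
   simplex, the polynomial has only nonnegative coefficients. *)
Lemma key_polynomial_nonneg Z d : 0 <= Z -> 0 <= d -> Z + d <= 1 ->
  0 <= (Z ^ 2 - Z ^ 4 / 3) * ((1 - (Z + d) ^ 2) * (1 - Z ^ 2) ^ 2 + d ^ 2) * (1 - (Z + d) * Z)
     - (Z ^ 2 / 2 - Z ^ 4 / 12) * ((1 - (Z + d) ^ 2) * (1 - Z ^ 2) ^ 2 + d ^ 2) * (1 - Z ^ 2)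
     + d * (Z ^ 3 / 3 - Z ^ 5 / 15) * (1 - Z ^ 2) * (1 - (Z + d) * Z).
Proof.
  intros hZ hd hZd.
  set (y := 1 - Z - d); assert (hy : 0 <= y) by (unfold y; lra).
  match goal with |- 0 <= ?e => replace e with (
      (1/2)*Z^2*y^10 + 5*Z^2*d*y^9 + (45/2)*Z^2*d^2*y^8 + 60*Z^2*d^3*y^7 + 105*Z^2*d^4*y^6 +
      126*Z^2*d^5*y^5 + 105*Z^2*d^6*y^4 + 60*Z^2*d^7*y^3 + (45/2)*Z^2*d^8*y^2 + 5*Z^2*d^9*y +
      (1/2)*Z^2*d^10 +
      5*Z^3*y^9 + (130/3)*Z^3*d*y^8 + (500/3)*Z^3*d^2*y^7 + (1120/3)*Z^3*d^3*y^6 +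
      (1610/3)*Z^3*d^4*y^5 + (1540/3)*Z^3*d^5*y^4 + (980/3)*Z^3*d^6*y^3 + (400/3)*Z^3*d^7*y^2 +
      (95/3)*Z^3*d^8*y + (10/3)*Z^3*d^9 +
      (81/4)*Z^4*y^8 + (446/3)*Z^4*d*y^7 + (1429/3)*Z^4*d^2*y^6 + 870*Z^4*d^3*y^5 +
      (5945/6)*Z^4*d^4*y^4 + (2162/3)*Z^4*d^5*y^3 + 327*Z^4*d^6*y^2 + (254/3)*Z^4*d^7*y +
      (115/12)*Z^4*d^8 +
      42*Z^5*y^7 + (7603/30)*Z^5*d*y^6 + (3273/5)*Z^5*d^2*y^5 + (1879/2)*Z^5*d^3*y^4 +
      (2432/3)*Z^5*d^4*y^3 + (843/2)*Z^5*d^5*y^2 + (613/5)*Z^5*d^6*y + (463/30)*Z^5*d^7 +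
      46*Z^6*y^6 + (3289/15)*Z^6*d*y^5 + (6601/15)*Z^6*d^2*y^4 + (2398/5)*Z^6*d^3*y^3 +
      (4516/15)*Z^6*d^4*y^2 + (1549/15)*Z^6*d^5*y + 15*Z^6*d^6 +
      24*Z^7*y^5 + (434/5)*Z^7*d*y^4 + (2032/15)*Z^7*d^2*y^3 + (1729/15)*Z^7*d^3*y^2 +
      (154/3)*Z^7*d^4*y + (131/15)*Z^7*d^5 +
      4*Z^8*y^4 + (188/15)*Z^8*d*y^3 + (1231/60)*Z^8*d^2*y^2 + (443/30)*Z^8*d^3*y +
      (167/60)*Z^8*d^4 +
      (16/15)*Z^9*d*y^2 + (21/10)*Z^9*d^2*y + (11/30)*Z^9*d^3) by (unfold y; field) end.
  clearbody y.
  repeat (apply Rplus_le_le_0_compat || apply Rmult_le_pos); try apply pow_le; lra.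
Qed.

Lemma UL_lower_bound_nonneg a Z : 0 <= Z <= a -> a < 1 ->
  0 <= fB Z * (a - Z) - (a - Z) / (1 - a * Z) * (Z ^ 2 / 2 - Z ^ 4 / 12)
       + (a - Z) ^ 2 / ((1 - a ^ 2) * (1 - Z ^ 2) ^ 2 + (a - Z) ^ 2) * (Z ^ 3 / 3 - Z ^ 5 / 15).
Proof.
  intros hZ ha.
  assert (hpoly := key_polynomial_nonneg Z (a - Z) ltac:(lra) ltac:(lra) ltac:(lra)).
  replace (Z + (a - Z)) with a in hpoly by ring.
  assert (hZ2 : 0 < 1 - Z ^ 2) by nra.
  assert (haZ : 0 < 1 - a * Z) by nra.
  assert (hal : 0 < (1 - a ^ 2) * (1 - Z ^ 2) ^ 2 + (a - Z) ^ 2).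
  { assert (0 < (1 - a ^ 2) * (1 - Z ^ 2) ^ 2) by (apply Rmult_lt_0_compat; nra). nra. }
  set (al := (1 - a ^ 2) * (1 - Z ^ 2) ^ 2 + (a - Z) ^ 2) in *.
  unfold fB.
  match goal with |- 0 <= ?e => replace e with
    ((a - Z) / (al * (1 - a * Z) * (1 - Z ^ 2)) *
     ((Z ^ 2 - Z ^ 4 / 3) * al * (1 - a * Z) - (Z ^ 2 / 2 - Z ^ 4 / 12) * al * (1 - Z ^ 2)
      + (a - Z) * (Z ^ 3 / 3 - Z ^ 5 / 15) * (1 - Z ^ 2) * (1 - a * Z)))
    by (field; repeat split; lra) end.
  apply Rmult_le_pos; [apply Rdiv_le_0_compat; [lra |] | exact hpoly].
  apply Rmult_lt_0_compat; [apply Rmult_lt_0_compat |]; lra.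
Qed.

(* Uses [E0 - r z / 2 >= (E0 + S) / 2] and [1 + (r ^ 2 / 4) (1 - z ^ 2) <= 1 + r ^ 2 / 4]. *)
Lemma gBr_fU_combination_le E0 S r z Z : 0 <= r -> 0 <= z <= Z -> Z <= 1 ->
  0 < E0 + S -> r * Z = E0 - S ->
  r / 2 * ((z - z ^ 3 / 3) / (E0 - r * z / 2))
    - r ^ 2 / 4 * ((z ^ 2 - z ^ 4 / 3) / (1 + r ^ 2 * (1 - z ^ 2) / 4))
  <= (z - z ^ 3 / 3) * (r / (E0 + S) - r ^ 2 / 4 / (1 + r ^ 2 / 4) * z).
Proof.
  intros hr hz hZ hES hrZ.
  generalize (cubic_bounds z ltac:(lra)); intros hg.
  set (g := z - z ^ 3 / 3) in *.
  replace (z ^ 2 - z ^ 4 / 3) with (z * g) by (unfold g; field).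
  set (c := r ^ 2 / 4); replace (r ^ 2 * (1 - z ^ 2) / 4) with (c * (1 - z ^ 2)) by (unfold c; field).
  assert (hc : 0 <= c) by (unfold c; nra).
  assert (r * z <= r * Z) by (apply Rmult_le_compat_l; lra).
  assert (h1 : r / 2 * (g / (E0 - r * z / 2)) <= g * (r / (E0 + S))).
  { replace (r / 2 * (g / (E0 - r * z / 2))) with (g * ((r / 2) / (E0 - r * z / 2))) by (field; lra).
    apply Rmult_le_compat_l; [lra |].
    replace (r / (E0 + S)) with ((r / 2) / ((E0 + S) / 2)) by (field; lra).
    apply Rdiv_le_cross; try lra; apply Rmult_le_compat_l; lra. }
  assert (h2 : g * (c / (1 + c) * z) <= c * (z * g / (1 + c * (1 - z ^ 2)))).
  { assert (0 <= c * (1 - z ^ 2)) by (apply Rmult_le_pos; nra).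
    replace (g * (c / (1 + c) * z)) with (c * z * g / (1 + c)) by (field; lra).
    replace (c * (z * g / (1 + c * (1 - z ^ 2)))) with (c * z * g / (1 + c * (1 - z ^ 2)))
      by (field; lra).
    assert (0 <= c * z * g) by (apply Rmult_le_pos; [apply Rmult_le_pos |]; lra).
    apply Rdiv_le_cross; try lra; apply Rmult_le_compat_l; nra. }
  lra.
Qed.

Lemma Rint_gBr_fU_le L r : 1 <= L -> 0 < r <= 2 * L ->
  let Z := ZL L r in
  r / 2 * Rint (gBr L r) 0 Z - r ^ 2 / 4 * Rint (fU r) 0 Z
  <= r / (E L + E (L - r)) * (Z ^ 2 / 2 - Z ^ 4 / 12)
     - r ^ 2 / 4 / (1 + r ^ 2 / 4) * (Z ^ 3 / 3 - Z ^ 5 / 15).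
Proof.
  intros hL hr; cbv zeta.
  assert (hZ : 0 <= ZL L r <= L / E L) by (apply ZL_bounds; lra).
  assert (ha : L / E L < 1) by (apply div_E_bounds; lra).
  assert (hden : forall z, 0 <= z <= ZL L r -> 0 < E L - r * z / 2)
    by (intros; apply ZL_denominator_pos; lra).
  assert (hrZ : r * ZL L r = E L - E (L - r)) by (apply r_mul_ZL; lra).
  set (Z := ZL L r) in *.
  generalize (E_pos L) (E_pos (L - r)); intros hE hE'.
  assert (hg : continuous_on (gBr L r) 0 Z) by (apply gBr_continuous_on; auto).
  assert (hf : continuous_on (fU r) 0 Z) by (apply fU_continuous_on; lra).
  rewrite <- Rint_cubic_mult_affine, <- (Rint_scal _ 0 Z (r / 2)), <- (Rint_scal _ 0 Z (r ^ 2 / 4)),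
    <- Rint_minus by (auto; lra || (intros x hx; reg; apply hg || apply hf; lra)).
  apply Rint_le_compat; try lra.
  - intros x hx; reg; apply hg || apply hf; lra.
  - intros x hx; reg.
  - intros x hx; unfold gBr, fU; apply (gBr_fU_combination_le (E L) (E (L - r)) r x Z); lra.
Qed.

Lemma UL_ge0 L r : 1 <= L -> 0 <= r <= 2 * L -> 0 <= UL L r.
Proof.
  intros hL hr.
  destruct (Req_dec r 0) as [-> | hr0]; [rewrite UL_at_0; lra |].
  assert (hZ : 0 <= ZL L r <= L / E L) by (apply ZL_bounds; lra).
  assert (ha : L / E L < 1) by (apply div_E_bounds; lra).
  destruct (UL_U_decomposition L r hr hZ ha) as [hD _]; [intros; apply ZL_denominator_pos; lra |].
  assert (hI := Rint_gBr_fU_le L r hL ltac:(lra)); cbv zeta in hI.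
  rewrite (r_div_E_sum L r), (r_sqr_ratio L r) in hI by lra.
  assert (hpos := UL_lower_bound_nonneg _ _ hZ ha).
  set (a := L / E L) in *; set (Z := ZL L r) in *.
  assert (hB : fB Z * (a - Z) <= Rint fB Z a).
  { apply Rint_ge_const; try lra; [apply fB_continuous_on; lra |].
    intros x hx; apply fB_le_increasing; lra. }
  generalize PI_RGT_0; intros hpi.
  apply (Rmult_le_reg_l PI); lra.
Qed.

Lemma small_case_poly_le p q : 0 < q <= p -> p <= 3 * q -> q * (p ^ 2 + 1) ^ 2 <= 3 * p * (p * q + 1) ^ 2.
Proof.
  intros hq hp3.
  assert (h1 : q * (p ^ 2 + 1) <= p * (p * q + 1)).
  { replace (p * (p * q + 1)) with (q * (p ^ 2 + 1) + (p - q)) by ring; lra. }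
  assert (h2 : p ^ 2 + 1 <= 3 * (p * q + 1)).
  { assert (p * p <= p * (3 * q)) by (apply Rmult_le_compat_l; lra). nra. }
  assert (0 <= q * (p ^ 2 + 1)) by (apply Rmult_le_pos; [lra | generalize (pow2_ge_0 p); lra]).
  replace (3 * p * (p * q + 1) ^ 2) with (p * (p * q + 1) * (3 * (p * q + 1))) by ring.
  replace (q * (p ^ 2 + 1) ^ 2) with (q * (p ^ 2 + 1) * (p ^ 2 + 1)) by ring.
  generalize (pow2_ge_0 p); intros; apply Rmult_le_compat; lra.
Qed.

(* For [0 <= x <= L / E L] one has [1 - x ^ 2 >= 1 / E L ^ 2 >= 1 / (8 r ^ 2)]. *)
Lemma fB_le_fU_large L r x : E L ^ 2 <= 8 * r ^ 2 -> 0 <= x <= L / E L -> L / E L < 1 ->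
  fB x <= 33 * (r ^ 2 / 4) * fU r x.
Proof.
  intros hl hx ha; unfold fB, fU; generalize (quartic_bounds x ltac:(lra)) (one_sub_div_E_sqr L) (E_pos L).
  set (a := L / E L) in *; intros hP ha2 hE.
  assert (hx2 : x ^ 2 <= a ^ 2) by (apply pow_incr; lra).
  assert (h1x : 0 < 1 - x ^ 2) by nra.
  assert (hEa : 1 <= E L ^ 2 * (1 - a ^ 2)) by (rewrite ha2; field_simplify; lra || nra).
  assert (hM : 1 <= 8 * r ^ 2 * (1 - x ^ 2)).
  { apply Rle_trans with (E L ^ 2 * (1 - a ^ 2)); [lra |].
    apply Rmult_le_compat; nra. }
  replace (33 * (r ^ 2 / 4) * ((x ^ 2 - x ^ 4 / 3) / (1 + r ^ 2 * (1 - x ^ 2) / 4)))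
    with (33 * (r ^ 2 / 4) * (x ^ 2 - x ^ 4 / 3) / (1 + r ^ 2 * (1 - x ^ 2) / 4)) by (field; nra).
  apply Rdiv_le_cross; nra.
Qed.

Section Pieces.

Variables L r : R.
Hypotheses (hL : 1 <= L) (hr : 0 < r) (hr2 : r <= 2 * L).

Let a := L / E L.
Let Z := ZL L r.
Let c := r ^ 2 / 4.

Let hZ : 0 <= Z <= a.
Proof. exact (ZL_bounds L r hL hr hr2). Qed.

Let ha : a < 1.
Proof. exact (proj2 (div_E_bounds L ltac:(lra))). Qed.

Let hden z : 0 <= z <= Z -> 0 < E L - r * z / 2.
Proof. exact (ZL_denominator_pos L r hr z). Qed.

Lemma pieces_decomposition :
  PI * UL L r = Rint fB Z a + c * Rint (fU r) 0 Z - r / 2 * Rint (gBr L r) 0 Z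
  /\ PI * U r = c * (Rint (fU r) 0 Z + Rint (fU r) Z 1).
Proof. exact (UL_U_decomposition L r ltac:(lra) hZ ha hden). Qed.

Lemma Rint_fB_ge0 : 0 <= Rint fB Z a.
Proof.
  apply Rint_ge0; try lra; [apply fB_continuous_on; lra |].
  intros x hx; apply fB_ge0; lra.
Qed.

Lemma Rint_gBr_bounds : 0 <= r / 2 * Rint (gBr L r) 0 Z <= 2 * r / (3 * E L).
Proof.
  generalize (E_pos L) (E_pos (L - r)); intros hE hE'.
  assert (hrZ : r * Z <= E L) by (unfold Z; rewrite r_mul_ZL; lra).
  assert (hg := gBr_continuous_on L r 0 Z hden).
  assert (hpt : forall x, 0 <= x <= Z -> 0 <= gBr L r x <= 4 / 3 / E L).
  { intros x hx; unfold gBr; generalize (cubic_bounds x ltac:(lra)) (hden x hx); intros hc hd.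
    assert (r * x <= r * Z) by (apply Rmult_le_compat_l; lra).
    split; [apply Rdiv_le_0_compat | apply Rdiv_le_cross]; nra. }
  assert (h0 : 0 <= Rint (gBr L r) 0 Z) by (apply Rint_ge0; auto; [lra | apply hpt]).
  assert (h1 : Rint (gBr L r) 0 Z <= 4 / 3 / E L * (Z - 0))
    by (apply Rint_le_const; auto; [lra | apply hpt]).
  assert (r * Z <= r * 1) by (apply Rmult_le_compat_l; lra).
  split; [apply Rmult_le_pos; lra |].
  apply Rle_trans with (r / 2 * (4 / 3 / E L * (Z - 0))); [apply Rmult_le_compat_l; lra |].
  replace (r / 2 * (4 / 3 / E L * (Z - 0))) with (2 * (r * Z) / (3 * E L)) by (field; lra).
  unfold Rdiv; apply Rmult_le_compat_r; [left; apply Rinv_0_lt_compat |]; lra.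
Qed.

Lemma small_case_r_lt_half : 8 * r ^ 2 < E L ^ 2 -> 2 * r < L.
Proof.
  intros hs; rewrite E_sqr in hs.
  destruct (Rlt_or_le (2 * r) L) as [| h]; auto.
  assert (L * L <= 2 * r * (2 * r)) by (apply Rmult_le_compat; lra).
  nra.
Qed.

Lemma Rint_fB_small : 8 * r ^ 2 < E L ^ 2 -> Rint fB Z a <= r / E L.
Proof.
  intros hs; generalize (small_case_r_lt_half hs); intros hrL.
  generalize (param_p_ge_2 L hL) (param_q_pos L r) (param_q_lt_p L r hr)
    (param_pq_ge_1 L r hr2) (param_a_sub_ZL L r hr hr2) (param_r L r)
    (E_lt_add_1 L ltac:(lra)) (E_gt_abs (L - r)) (proj1 (proj2 (E_param L))).
  set (p := E L + L); set (q := E (L - r) + (L - r)).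
  intros hp hq hqp hpq haZ hrpq hEL hEq hEp.
  assert (hp3 : p <= 3 * q) by (unfold p, q; lra).
  assert (hfB : Rint fB Z a <= fB a * (a - Z)).
  { apply Rint_le_const; try lra; [apply fB_continuous_on; lra |].
    intros x hx; apply fB_le_increasing; lra. }
  generalize (fB_le_inv a ltac:(lra)); intros hfBa.
  apply Rle_trans with (2 / 3 / (1 - a ^ 2) * (a - Z)); [nra |].
  unfold a at 1; rewrite one_sub_div_E_sqr.
  replace (2 / 3 / / E L ^ 2) with (2 / 3 * E L ^ 2) by (field; apply Rgt_not_eq, E_pos).
  unfold a, Z; rewrite haZ; rewrite hrpq at 1; rewrite hEp.
  replace (2 / 3 * ((p ^ 2 + 1) / (2 * p)) ^ 2 * (2 * p * (p - q) / ((p ^ 2 + 1) * (p * q + 1))))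
    with ((p - q) * ((p ^ 2 + 1) / (3 * p * (p * q + 1)))) by (field; nra).
  replace ((p - q) * (p * q + 1) / (2 * p * q) / ((p ^ 2 + 1) / (2 * p)))
    with ((p - q) * ((p * q + 1) / (q * (p ^ 2 + 1)))) by (field; nra).
  apply Rmult_le_compat_l; [lra |].
  apply Rdiv_le_cross; try nra.
  generalize (small_case_poly_le p q ltac:(lra) hp3); nra.
Qed.

Lemma Rint_fU_tail_small : 8 * r ^ 2 < E L ^ 2 -> c * Rint (fU r) Z 1 <= r / E L.
Proof.
  intros hs; generalize (small_case_r_lt_half hs); intros hrL.
  generalize (param_p_ge_2 L hL) (param_q_pos L r) (param_pq_ge_1 L r hr2)
    (param_ZL L r hr hr2) (E_lt_add_1 L ltac:(lra)) (E_gt_abs (L - r)) (E_gt_abs L) (E_pos L).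
  set (p := E L + L); set (q := E (L - r) + (L - r)).
  intros hp hq hpq hZpq hEL hEq hEL' hE.
  assert (hint : Rint (fU r) Z 1 <= 2 / 3 * (1 - Z)).
  { apply Rint_le_const; try lra; [apply fU_continuous_on; lra |].
    intros x hx; apply fU_bounds; lra. }
  assert (h1Z : 1 - Z = 2 / (p * q + 1)) by (unfold Z; rewrite hZpq; field; lra).
  assert (hc : 0 <= c) by (unfold c; nra).
  apply Rle_trans with (c * (2 / 3 * (1 - Z))); [apply Rmult_le_compat_l; lra |].
  rewrite h1Z; unfold c.
  replace (r ^ 2 / 4 * (2 / 3 * (2 / (p * q + 1)))) with (r * r / (3 * (p * q + 1))) by (field; lra).
  apply Rdiv_le_cross; try lra.
  assert (L * L <= p * q) by (apply Rmult_le_compat; unfold p, q; lra).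
  assert (r * E L <= L * L) by (apply Rle_trans with (L / 2 * (L + 1)); [apply Rmult_le_compat | ]; nra).
  replace (r * r * E L) with (r * (r * E L)) by ring.
  apply Rmult_le_compat_l; lra.
Qed.

Lemma Rint_fB_large : E L ^ 2 <= 8 * r ^ 2 -> Rint fB Z a <= 33 * (c * Rint (fU r) Z 1).
Proof.
  intros hl.
  assert (hsplit : Rint (fU r) Z a + Rint (fU r) a 1 = Rint (fU r) Z 1)
    by (apply Rint_Chasles; try lra; apply fU_continuous_on; lra).
  assert (hpos : 0 <= Rint (fU r) a 1) by (apply Rint_fU_ge0; lra).
  assert (hc : 0 <= c) by (unfold c; nra).
  assert (hle : Rint fB Z a <= Rint (fun z => 33 * c * fU r z) Z a).
  { apply Rint_le_compat; try lra; [apply fB_continuous_on; lra | |].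
    - intros x hx; reg; apply (fU_continuous_on r Z a); lra.
    - intros x hx; apply (fB_le_fU_large L); unfold a in *; lra. }
  rewrite Rint_scal in hle by (try lra; apply fU_continuous_on; lra).
  nra.
Qed.

Lemma PI_abs_UL_U_le :
  PI * Rabs (UL L r - U r)
  <= Rint fB Z a + c * Rint (fU r) Z 1 + r / 2 * Rint (gBr L r) 0 Z.
Proof.
  destruct pieces_decomposition as [hUL hU].
  assert (hPD : PI * (UL L r - U r)
                = Rint fB Z a - c * Rint (fU r) Z 1 - r / 2 * Rint (gBr L r) 0 Z)
    by (rewrite Rmult_minus_distr_l, hUL, hU; ring).
  generalize PI_RGT_0 Rint_fB_ge0 (Rint_fU_ge0 r Z 1 ltac:(lra) ltac:(lra)) Rint_gBr_bounds;
    intros hpi h1 h2 h3.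
  assert (0 <= c) by (unfold c; nra).
  rewrite <- (Rabs_pos_eq PI), <- Rabs_mult, hPD by lra.
  apply Rabs_le; split; nra.
Qed.

End Pieces.

Lemma UL_U_diff_small L r : 1 <= L -> 0 < r <= 2 * L -> 8 * r ^ 2 < E L ^ 2 ->
  Rabs (UL L r - U r) <= r / E L.
Proof.
  intros hL hr hs.
  generalize (PI_abs_UL_U_le L r hL ltac:(lra) ltac:(lra))
    (Rint_fB_small L r hL ltac:(lra) ltac:(lra) hs) (Rint_fU_tail_small L r hL ltac:(lra) ltac:(lra) hs)
    (Rint_gBr_bounds L r hL ltac:(lra) ltac:(lra)) PI_gt_3 (Rabs_pos (UL L r - U r)) (E_pos L).
  intros hD h1 h2 h3 hpi hA hE.
  assert (h : 2 * r / (3 * E L) = 2 / 3 * (r / E L)) by (field; lra).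
  assert (0 <= r / E L) by (apply Rdiv_le_0_compat; lra).
  nra.
Qed.

Lemma UL_U_diff_large L r : 1 <= L -> 0 < r <= 2 * L -> E L ^ 2 <= 8 * r ^ 2 ->
  Rabs (UL L r - U r) <= 34 * U r + 1 / 2.
Proof.
  intros hL hr hl.
  generalize (PI_abs_UL_U_le L r hL ltac:(lra) ltac:(lra))
    (Rint_fB_large L r hL ltac:(lra) ltac:(lra) hl) (Rint_gBr_bounds L r hL ltac:(lra) ltac:(lra))
    (pieces_decomposition L r hL ltac:(lra) ltac:(lra)) (Rint_fU_ge0 r 0 (ZL L r))
    PI_gt_3 (E_pos L) (E_gt_abs L).
  intros hD h1 h3 [_ hU] h4 hpi hE hEL.
  assert (2 * r / (3 * E L) <= 4 / 3) by (apply Rdiv_le_cross; lra).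
  assert (hZ : 0 <= ZL L r <= L / E L) by (apply ZL_bounds; lra).
  assert (ha : L / E L < 1) by (apply div_E_bounds; lra).
  specialize (h4 ltac:(lra) ltac:(lra)).
  assert (r ^ 2 / 4 * Rint (fU r) 0 (ZL L r) >= 0) by (generalize (pow2_ge_0 r); nra).
  apply (Rmult_le_reg_l PI); lra.
Qed.

Lemma UL_U_diff_le_34 L r : 1 <= L -> 0 <= r -> Rabs (UL L r - U r) <= 34 * (1 + U r).
Proof.
  intros hL hr; generalize (U_ge0 r); intros hU.
  destruct (Req_dec r 0) as [-> | hr0].
  { rewrite UL_at_0, U_at_0, Rminus_0_r, Rabs_R0 by lra; lra. }
  destruct (Rlt_or_le (2 * L) r) as [hgt | hle].
  { rewrite UL_out_of_range, Rminus_0_l, Rabs_Ropp, Rabs_pos_eq by lra; lra. }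
  destruct (Rlt_or_le (8 * r ^ 2) (E L ^ 2)) as [hs | hl].
  - generalize (UL_U_diff_small L r hL ltac:(lra) hs) (E_pos L); intros hD hE.
    assert (r / E L < 1) by (apply Rdiv_lt_1; nra).
    lra.
  - generalize (UL_U_diff_large L r hL ltac:(lra) hl); lra.
Qed.

Lemma UL_U_diff_le_E2L L r : 1 <= L -> 0 < r <= 2 * L ->
  Rabs (UL L r - U r) <= 400 * r * (1 + U r) / E (2 * L).
Proof.
  intros hL hr; generalize (U_ge0 r) (E_pos L) (E_pos (2 * L)) (E_double_le L); intros hU hE hE2 hE2L.
  destruct (Rlt_or_le (8 * r ^ 2) (E L ^ 2)) as [hs | hl].
  - apply Rle_trans with (r / E L); [apply UL_U_diff_small; lra |].
    apply Rdiv_le_cross; try lra.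
    assert (0 <= r * U r) by (apply Rmult_le_pos; lra).
    nra.
  - apply Rle_trans with (34 * (1 + U r)); [apply UL_U_diff_le_34; lra |].
    assert (h68 : 34 * E (2 * L) <= 400 * r) by nra.
    rewrite <- (Rdiv_1_r (34 * (1 + U r))); apply Rdiv_le_cross; nra.
Qed.

Lemma UL_le_kappa1 L r : 1 <= L -> 0 <= r -> UL L r <= kappa1 * (1 + U r).
Proof.
  intros hL hr; generalize (UL_U_diff_le_34 L r hL hr) (U_ge0 r) PI_RGT_0 PI_4; intros hD hU hpi hpi4.
  apply Rle_trans with (35 * (1 + U r)); [generalize (Rle_abs (UL L r - U r)); lra |].
  unfold kappa1; apply Rmult_le_compat_r; [lra |].
  apply (Rmult_le_reg_r PI); [lra |]; field_simplify; lra.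
Qed.

Lemma fU_ge_inv_affine r x : 1 / 2 <= x <= 1 ->
  let c := r ^ 2 / 4 in c / 6 / (1 + 2 * c * (1 - x)) <= c * fU r x.
Proof.
  intros hx c; assert (hc : 0 <= c) by (unfold c; nra); unfold fU.
  replace (r ^ 2 * (1 - x ^ 2) / 4) with (c * (1 - x) * (1 + x)) by (unfold c; field).
  assert (hP : 1 / 6 <= x ^ 2 - x ^ 4 / 3).
  { replace (x ^ 4) with (x ^ 2 * x ^ 2) by ring.
    assert (0 <= (x ^ 2 - 1 / 4) * (1 - x ^ 2)) by (apply Rmult_le_pos; nra).
    nra. }
  assert (hcx : 0 <= c * (1 - x)) by (apply Rmult_le_pos; lra).
  assert (c * (1 - x) * (1 + x) <= c * (1 - x) * 2) by (apply Rmult_le_compat_l; lra).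
  assert (0 <= c * (1 - x) * (1 + x)) by (apply Rmult_le_pos; lra).
  rewrite Rmult_div_assoc; apply Rdiv_le_cross; try lra.
  apply Rle_trans with (c / 6 * (1 + 2 * c * (1 - x))); [apply Rmult_le_compat_l; lra |].
  apply Rmult_le_compat_r; [lra |].
  unfold Rdiv at 1; apply Rmult_le_compat_l; lra.
Qed.

Lemma PI_U_ge_ln r : ln (1 + r ^ 2 / 4) / 12 <= PI * U r.
Proof.
  set (c := r ^ 2 / 4); assert (hc : 0 <= c) by (unfold c; nra).
  assert (hU : PI * U r = c * Rint (fU r) 0 1)
    by (rewrite U_fU; unfold c; field; apply PI_neq0).
  assert (hsplit : Rint (fU r) 0 (1 / 2) + Rint (fU r) (1 / 2) 1 = Rint (fU r) 0 1)
    by (apply Rint_Chasles; try lra; apply fU_continuous_on; lra).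
  assert (h0 : 0 <= Rint (fU r) 0 (1 / 2)) by (apply Rint_fU_ge0; lra).
  assert (hle : Rint (fun z => c / 6 / (1 + 2 * c * (1 - z))) (1 / 2) 1
                <= Rint (fun z => c * fU r z) (1 / 2) 1).
  { apply Rint_le_compat; try lra.
    - intros x hx; reg; nra.
    - intros x hx; reg; apply (fU_continuous_on r (1 / 2) 1); lra.
    - intros x hx; apply fU_ge_inv_affine; lra. }
  rewrite Rint_inv_affine_tail, Rint_scal in hle by (try lra; apply fU_continuous_on; lra).
  nra.
Qed.

Lemma PI_BL_le_ln L : 1 <= L -> PI * BL L <= 2 / 3 * ln (2 * (1 + L ^ 2)).
Proof.
  intros hL; generalize (E_sqr L) (E_pos L) (E_gt_abs L) (div_E_bounds L ltac:(lra)); intros hE2 hE hEL ha.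
  set (a := L / E L) in *.
  assert (hB : PI * BL L = Rint fB 0 a) by (rewrite BL_fB; fold a; field; apply PI_neq0).
  assert (hle : Rint fB 0 a <= Rint (fun z => 2 / 3 / (1 - z)) 0 a).
  { apply Rint_le_compat; try lra; [apply fB_continuous_on; lra | intros x hx; reg; lra |].
    intros x hx; apply Rle_trans with (2 / 3 / (1 - x ^ 2)); [apply fB_le_inv; lra |].
    apply Rdiv_le_cross; nra. }
  rewrite Rint_inv_1_minus in hle by lra.
  assert (hinv : / (1 - a) = E L * (E L + L)) by (unfold a; field_simplify_eq; nra).
  assert (- ln (1 - a) = ln (E L * (E L + L))) by (rewrite <- hinv, ln_Rinv; lra).
  assert (ln (E L * (E L + L)) <= ln (2 * (1 + L ^ 2))) by (apply ln_le; nra).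
  lra.
Qed.

Lemma kappa0_ge_20 : 20 <= kappa0.
Proof. unfold kappa0; generalize PI_gt_3; lra. Qed.

Lemma kappa0_one_add_U_ge r : kappa0 + 5 / 8 * ln (1 + r ^ 2 / 4) <= kappa0 * (1 + U r).
Proof. generalize (PI_U_ge_ln r); unfold kappa0; lra. Qed.

Lemma one_add_BL_le L : 1 <= L -> 1 + BL L <= 1 + 1 / 4 * ln (2 * (1 + L ^ 2)).
Proof.
  intros hL; generalize (PI_BL_le_ln L hL) PI_gt_3; intros hB hpi.
  assert (hln : 0 <= ln (2 * (1 + L ^ 2))) by (rewrite <- ln_1; apply ln_le; nra).
  assert (PI * BL L <= PI * (1 / 4 * ln (2 * (1 + L ^ 2)))) by nra.
  apply Rmult_le_reg_l in H; lra.
Qed.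

(* If [t ^ m < A] then [m] is at most [2 K] with [K = 2 + ln A / 2], and the gain
   [(Y / t) ^ m] is then controlled by [ln (K' / K) <= (ln E2 - ln A) / (2 K)], with
   [K' = 2 + ln E2 / 2]. *)
Lemma log_interpolation A E2 Y t m : 0 < A <= E2 -> 1 <= Y -> 2 <= t ->
  2 + ln A / 2 <= t -> Y <= 2 + ln E2 / 2 -> t ^ m < A -> A * Y ^ m <= E2 * t ^ m.
Proof.
  intros hA hY ht htA hYE hlt.
  set (mu := ln A) in *; set (la := ln E2) in *; set (M := INR m).
  assert (hlnt : 0 < ln t) by (rewrite <- ln_1; apply ln_increasing; lra).
  assert (hm : M * ln t < mu) by (unfold M, mu; rewrite <- ln_pow by lra; apply ln_increasing; auto; apply pow_lt; lra).
  assert (hM : 0 <= M) by apply pos_INR.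
  assert (hmu : 0 < mu) by nra.
  set (K := 2 + mu / 2) in *; assert (hK : 2 < K) by (unfold K; lra).
  assert (hlnK : mu / (2 * K) <= ln t).
  { apply Rle_trans with (ln K); [| apply ln_le; lra].
    generalize (ln_sub_le K 1 ltac:(lra) ltac:(lra)); rewrite ln_1.
    replace ((1 - K) / K) with (- (mu / (2 * K)) - 1 / K) by (unfold K; field; lra).
    assert (0 < 1 / K) by (apply Rdiv_lt_0_compat; lra).
    lra. }
  assert (hmK : M <= 2 * K).
  { assert (M * (mu / (2 * K)) < mu) by (apply Rle_lt_trans with (M * ln t); [apply Rmult_le_compat_l |]; lra).
    replace (M * (mu / (2 * K))) with (mu * (M / (2 * K))) in H by (field; lra).
    assert (M / (2 * K) < 1) by nra.
    replace M with (M / (2 * K) * (2 * K)) by (field; lra).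
    nra. }
  assert (hmula : mu <= la) by (apply ln_le; lra).
  assert (hYt : ln Y - ln t <= (la - mu) / (2 * K)).
  { apply Rle_trans with (ln (2 + la / 2) - ln K); [generalize (ln_le Y (2 + la / 2)) (ln_le K t); lra |].
    apply Rle_trans with ((2 + la / 2 - K) / K); [apply ln_sub_le; lra |].
    unfold K; apply Req_le; field; lra. }
  assert (hgain : M * (ln Y - ln t) <= la - mu).
  { apply Rle_trans with (M * ((la - mu) / (2 * K))); [apply Rmult_le_compat_l; lra |].
    assert (0 <= (la - mu) / (2 * K)) by (apply Rdiv_le_0_compat; lra).
    replace (M * ((la - mu) / (2 * K))) with (M / (2 * K) * (la - mu)) by (field; lra).
    assert (M / (2 * K) <= 1) by (apply (Rmult_le_reg_r (2 * K)); [lra |]; field_simplify; lra).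
    nra. }
  apply ln_le_inv; try (apply Rmult_lt_0_compat; [lra | apply pow_lt; lra]).
  rewrite !ln_mult, !ln_pow by (try apply pow_lt; lra).
  fold mu la M; lra.
Qed.

Lemma weighted_bound d X Y E2 A k m : 34 <= k ^ 3 -> 2 <= k ->
  1 <= X -> 1 <= Y -> 1 <= E2 -> 0 <= d <= 34 * X ->
  (Y <= k * X \/
   (0 < A <= E2 /\ d * E2 <= k ^ 3 * A * X /\ 2 + ln A / 2 <= k * X /\ Y <= 2 + ln E2 / 2)) ->
  d / X ^ S m <= k ^ (m + 3) * Rmax (/ Y ^ m) (/ E2).
Proof.
  intros hk3 hk hX hY hE2 hd hcase.
  assert (hXm : 0 < X ^ m) by (apply pow_lt; lra).
  assert (hYm : 0 < Y ^ m) by (apply pow_lt; lra).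
  assert (hkXm : 0 < (k * X) ^ m) by (apply pow_lt; nra).
  set (B := k ^ 3 * X * (k * X) ^ m).
  assert (hB : B = k ^ (m + 3) * X ^ S m) by (unfold B; rewrite pow_add, Rpow_mult_distr; simpl; ring).
  assert (hkey : d * Y ^ m <= B \/ d * E2 <= B).
  { destruct hcase as [hYk | (hA & hdA & htA & hYE)].
    - left; unfold B.
      assert (Y ^ m <= (k * X) ^ m) by (apply pow_incr; lra).
      apply Rle_trans with (34 * X * (k * X) ^ m); [apply Rmult_le_compat; lra |].
      apply Rmult_le_compat_r; nra.
    - destruct (Rle_or_lt A ((k * X) ^ m)) as [hAt | htA'].
      + right; unfold B; apply Rle_trans with (k ^ 3 * A * X); [lra |].
        replace (k ^ 3 * A * X) with (k ^ 3 * X * A) by ring.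
        apply Rmult_le_compat_l; nra.
      + left; unfold B.
        generalize (log_interpolation A E2 Y (k * X) m hA ltac:(lra) ltac:(nra) htA hYE htA').
        intros hl; apply (Rmult_le_reg_r E2); [lra |].
        apply Rle_trans with (k ^ 3 * X * (A * Y ^ m)); [nra |].
        replace (k ^ 3 * X * (k * X) ^ m * E2) with (k ^ 3 * X * (E2 * (k * X) ^ m)) by ring.
        apply Rmult_le_compat_l; nra. }
  assert (hXS : 0 < X ^ S m) by (apply pow_lt; lra).
  apply (Rmult_le_reg_r (X ^ S m)); [lra |].
  replace (d / X ^ S m * X ^ S m) with d by (field; lra).
  rewrite Rmult_assoc, (Rmult_comm (Rmax _ _)), <- Rmult_assoc, <- hB.
  destruct hkey as [h | h]; [generalize (Rmax_l (/ Y ^ m) (/ E2)) | generalize (Rmax_r (/ Y ^ m) (/ E2))];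
    intros hmax; [apply Rle_trans with (B * / Y ^ m) | apply Rle_trans with (B * / E2)];
    try (apply Rmult_le_compat_l; nra).
  - apply (Rmult_le_reg_r (Y ^ m)); [lra |]; field_simplify; lra.
  - apply (Rmult_le_reg_r E2); [lra |]; field_simplify; lra.
Qed.

Lemma UL_tendsto_U r : 0 <= r -> forall eps, 0 < eps ->
  exists M, forall L, M <= L -> Rabs (UL L r - U r) < eps.
Proof.
  intros hr eps heps.
  destruct (Req_dec r 0) as [-> | hr0].
  { exists 0; intros L hL; rewrite UL_at_0, U_at_0, Rminus_0_r, Rabs_R0 by lra; lra. }
  exists (3 * r + 1 + r / eps); intros L hL.
  assert (hre : 0 <= r / eps) by (apply Rdiv_le_0_compat; lra).
  generalize (E_gt_abs L) (E_pos L); intros hEL hE.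
  assert (hs : 8 * r ^ 2 < E L ^ 2) by nra.
  apply Rle_lt_trans with (r / E L); [apply UL_U_diff_small; lra |].
  apply (Rmult_lt_reg_r (E L)); [lra |].
  replace (r / E L * E L) with (r / eps * eps) by (field; lra).
  rewrite (Rmult_comm eps); apply Rmult_lt_compat_r; lra.
Qed.

Lemma UL_U_weighted_bound L m r : 1 <= L -> 0 <= r ->
  Rabs ((UL L r - U r) / (1 + U r) ^ S m)
  <= kappa0 ^ (m + 3) * Rmax (/ (1 + BL L) ^ m) (/ E (2 * L)).
Proof.
  intros hL hr.
  generalize (U_ge0 r) (BL_ge0 L ltac:(lra)) (E_ge_1 (2 * L)) kappa0_ge_20 (E_pos (2 * L));
    intros hU hB hE2 hk hE2p.
  assert (hk3 : 8000 <= kappa0 ^ 3) by (simpl; nra).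
  unfold Rdiv; rewrite Rabs_mult, Rabs_inv, (Rabs_pos_eq ((1 + U r) ^ S m))
    by (apply pow_le; lra).
  destruct (Req_dec r 0) as [-> | hr0].
  { rewrite UL_at_0, U_at_0, Rminus_0_r, Rabs_R0, Rmult_0_l by lra.
    apply Rmult_le_pos; [apply pow_le; lra |].
    apply Rle_trans with (/ E (2 * L)); [left; apply Rinv_0_lt_compat; lra | apply Rmax_r]. }
  apply (weighted_bound _ _ _ _ (400 * r / kappa0 ^ 3)); try lra.
  - split; [apply Rabs_pos | apply UL_U_diff_le_34; lra].
  - generalize (kappa0_one_add_U_ge r) (one_add_BL_le L hL) ln2_le_1; intros hkX hY hln2.
    assert (hlnr : 0 <= ln (1 + r ^ 2 / 4)) by (rewrite <- ln_1; apply ln_le; nra).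
    destruct (Rle_or_lt r (2 * L)) as [hle | hgt].
    + right; set (A := 400 * r / kappa0 ^ 3).
      assert (hA0 : 0 < A) by (apply Rdiv_lt_0_compat; lra).
      assert (hA : A <= r / 20) by (apply Rdiv_le_cross; nra).
      generalize (E_gt_abs (2 * L)) (E_sqr (2 * L)); intros hE2L hE2s.
      assert (hlnA : ln (A ^ 2) <= ln (1 + r ^ 2 / 4)) by (apply ln_le; [apply pow_lt | ]; nra).
      assert (hlnE : ln (2 * (1 + L ^ 2)) <= ln (2 * E (2 * L) ^ 2)) by (apply ln_le; nra).
      rewrite ln_pow in hlnA by lra.
      rewrite (ln_mult 2 (E (2 * L) ^ 2)), (ln_pow (E (2 * L))) in hlnE by (try apply pow_lt; lra).
      simpl INR in hlnA, hlnE.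
      assert (0 <= ln (E (2 * L))) by (rewrite <- ln_1; apply ln_le; lra).
      repeat split; try lra.
      replace (kappa0 ^ 3 * A * (1 + U r)) with (400 * r * (1 + U r) / E (2 * L) * E (2 * L))
        by (unfold A; field; lra).
      apply Rmult_le_compat_r; [lra | apply UL_U_diff_le_E2L; lra].
    + left.
      assert (L * L <= r / 2 * (r / 2)) by (apply Rmult_le_compat; lra).
      assert (ln (2 * (1 + L ^ 2)) <= ln 2 + ln (1 + r ^ 2 / 4)) by (rewrite <- ln_mult by nra; apply ln_le; nra).
      lra.
Qed.

Theorem proposition1 :
  (forall r : R, 0 <= r ->
     forall eps : R, 0 < eps ->
       exists M : R, forall L : R, M <= L -> Rabs (UL L r - U r) < eps)
  /\
  (forall (L : R) (m : nat), 1 <= L ->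
     forall r : R, 0 <= r ->
       Rabs ((UL L r - U r) / (1 + U r) ^ (S m))
       <= kappa0 ^ (m + 3) * Rmax (/ (1 + BL L) ^ m) (/ E (2 * L)))
  /\
  (forall L r : R, 1 <= L -> 0 <= r -> r <= 2 * L ->
     0 <= UL L r /\ UL L r <= kappa1 * (1 + U r)).
Proof.
  split; [| split].
  - exact UL_tendsto_U.
  - intros L m hL r hr; exact (UL_U_weighted_bound L m r hL hr).
  - intros L r hL hr hr2; split; [apply UL_ge0 | apply UL_le_kappa1]; lra.
Qed.
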